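(* Let $k\ge 1$. If a bar $k$-visibility graph is triangle-free, then it is a disjoint union of caterpillars.
   Context: A bar $k$-visibility representation is a finite collection of pairwise disjoint closed horizontal line segments (bars) in the plane; two bars are joined by a line of sight if there is a vertical segment with endpoints on the two bars intersecting at most $k$ other bars. The bar $k$-visibility graph has one vertex per bar, two vertices adjacent iff their bars are joined by a line of sight. A caterpillar is a tree in which all vertices are within distance one of a central path. *)

From mathcomp Require Import all_boot all_order all_algebra.
From mathcomp Require Import boolp reals.
Set Implicit Arguments. Unset Strict Implicit. Unset Printing Implicit Defensive.
Import Order.TTheory GRing.Theory Num.Theory.
Local Open Scope ring_scope.

(* A bar representation with n bars: bar i is the closed horizontal segment
   [bl i, br i] x {by_ i}, with bl i < br i. *)
Definition bars_ok (R : realType) (n : nat) (bl br by_ : 'I_n -> R) : Prop :=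
  (forall i, bl i < br i) /\
  (forall i j, i != j -> by_ i = by_ j -> (br i < bl j) \/ (br j < bl i)).

Definition bar_meets_vseg (R : realType) (n : nat) (bl br by_ : 'I_n -> R)
  (x ya yb : R) (b : 'I_n) : bool :=
  (bl b <= x <= br b) && (Num.min ya yb <= by_ b <= Num.max ya yb).

Definition bar_kvis_adj (R : realType) (n k : nat) (bl br by_ : 'I_n -> R)
  (i j : 'I_n) : Prop :=
  i != j /\ by_ i != by_ j /\
  exists x : R, bl i <= x <= br i /\ bl j <= x <= br j /\
    (#|[set b : 'I_n | (b != i) && (b != j) &&
         bar_meets_vseg bl br by_ x (by_ i) (by_ j) b]| <= k)%N.

Definition bar_kvis_rel (R : realType) (n k : nat) (bl br by_ : 'I_n -> R)
  : rel 'I_n := fun i j => `[< bar_kvis_adj k bl br by_ i j >].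

Definition triangle_free (T : finType) (e : rel T) : Prop :=
  forall a b c : T, ~ (e a b /\ e b c /\ e c a).

Definition acyclic (T : finType) (e : rel T) : Prop :=
  forall p : seq T, uniq p -> (3 <= size p)%N -> ~~ cycle e p.

(* Disjoint union of caterpillars: the graph is a forest and every connected
   component contains a (simple) path such that every vertex of the component
   is on the path or adjacent to a vertex of the path. *)
Definition caterpillar_forest (T : finType) (e : rel T) : Prop :=
  acyclic e /\
  forall x : T, exists p : seq T,
    [/\ p != [::], uniq p, sorted e p, all (connect e x) p &
      forall y, connect e x y -> (y \in p) \/ (exists2 z, z \in p & e z y)].

From mathcomp Require Import all_boot all_order all_algebra.
From mathcomp Require Import boolp reals zify.
Set Implicit Arguments. Unset Strict Implicit. Unset Printing Implicit Defensive.
Import Order.TTheory GRing.Theory Num.Theory.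

(* Over no abscissa x do three bars lie: among the bars over x, recurse on the
   bars strictly between the lowest and the highest until three consecutive
   ones remain; the outer two are then blocked by the middle one only, so with
   k >= 1 the three see each other pairwise, a triangle.  Consequently two bars
   see each other exactly when their x-projections overlap, and the graph is an
   interval graph in which no point is covered three times.  Such a graph has no
   cycle: the two cycle-neighbours of the interval with the leftmost right end
   would both cover that end.  And a longest path of a component dominates it:
   if a path vertex q had an outside neighbour w with a neighbour z far from the
   path, then w sticks out of q over one of its ends, so one of the path
   neighbours of q is nested in q; being nested, it is a leaf, hence an end of
   the path, which can be replaced by w and z. *)

Lemma cycle_neighbours (T : eqType) (e : rel T) (p : seq T) v :
  uniq p -> (3 <= size p)%N -> cycle e p -> v \in p ->
  exists a c, [/\ a \in p, c \in p, a != c, e v a & e c v].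
Proof.
move=> up p3 cp /rot_to[i s rotE].
have mem_p u : u \in v :: s -> u \in p by rewrite -rotE mem_rot.
have : [/\ uniq (v :: s), cycle e (v :: s) & (2 < size (v :: s))%N].
  by rewrite -rotE rot_uniq rot_cycle size_rot.
clear rotE; case: s mem_p => [|a s]; first by move=> _ [].
case/lastP: s => [|s c] mem_p [] //.
rewrite /= rcons_path last_rcons => /and3P[_ anc _] /and3P[va _ cv] _.
have ac : a != c by apply: contraNneq anc => ->; rewrite mem_rcons mem_head.
by exists a, c; split; rewrite // mem_p // !inE ?mem_rcons ?inE eqxx ?orbT.
Qed.

Section Spines.
Variables (T : finType) (e : rel T).
Hypothesis e_sym : symmetric e.

Definition pendant (q a : T) : Prop := forall c, e c a -> c = q.

Hypothesis neighbours_pendant : forall q a b w z,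
  a != b -> w != a -> w != b -> z != q ->
  e q a -> e q b -> e q w -> e w z -> ~~ e q z -> pendant q a \/ pendant q b.

Definition spine (x : T) (p : seq T) :=
  [&& p != [::], uniq p, sorted e p & all (connect e x) p].

Definition dominated (p : seq T) (y : T) := (y \in p) || has (e^~ y) p.

Lemma spine_rev x p : spine x p -> spine x (rev p).
Proof.
case/and4P=> p0 up sp cp; apply/and4P; split.
- by rewrite -size_eq0 size_rev size_eq0.
- by rewrite rev_uniq.
- by rewrite rev_sorted (@eq_sorted _ _ e) // => y z; rewrite e_sym.
- by rewrite all_rev.
Qed.

Lemma spine_size x p : spine x p -> (size p <= #|T|)%N.
Proof. by case/and4P=> _ up _ _; rewrite -(card_uniqP up) max_card. Qed.

Lemma path_crosses (P : pred T) q y : connect e q y -> P q -> ~~ P y ->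
  exists w z, [/\ e w z, P w, ~~ P z & connect e q w].
Proof.
move=> /connectP[s qs ->]; elim: s q qs => [|c s IH] q /=; first by move=> _ ->.
case/andP=> qc cs Pq Pl; have [Pc|nPc] := boolP (P c); last by exists q, c.
have [w [z [wz Pw nPz cw]]] := IH c cs Pc Pl.
by exists w, z; split=> //; apply: connect_trans (connect1 qc) cw.
Qed.

Lemma spine_escape x p y : spine x p -> connect e x y -> ~~ dominated p y ->
  exists q w z, [/\ q \in p, w \notin p, z \notin p, e q w & e w z] /\
    ~~ e q z /\ connect e x w.
Proof.
case/and4P=> p0 _ _ cp xy ndy.
have [q0 q0p] : exists q0, q0 \in p.
  by case: p p0 {cp ndy} => // q0 p _; exists q0; rewrite mem_head.
have xq0 := allP cp q0 q0p.
have q0y : connect e q0 y.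
  by apply: connect_trans _ xy; rewrite (sym_connect_sym e_sym).
have dq0 : dominated p q0 by rewrite /dominated q0p.
have [w [z [wz dw ndz q0w]]] := path_crosses q0y dq0 ndy.
move: ndz; rewrite /dominated negb_or => /andP[zp /hasPn zn].
have wp : w \notin p by apply: contraTN wz => /zn.
move: dw; rewrite /dominated (negbTE wp) => /hasP[q qp qw].
by exists q, w, z; split; [|split=> //; [exact: zn|exact: connect_trans q0w]].
Qed.

Lemma spine_extend x s1 q s2 w z :
  spine x (s1 ++ q :: s2) -> w \notin s1 ++ q :: s2 -> z \notin s1 ++ q :: s2 ->
  z != w -> e q w -> e w z -> connect e x w -> spine x [:: z, w, q & s2].
Proof.
case/and4P=> _ up sp cp; rewrite !mem_cat => /norP[_ wq] /norP[_ zq].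
move=> zw qw wz xw; move: up sp cp.
rewrite cat_uniq sorted_cat_cons all_cat => /and3P[_ _ uq] /andP[_ sq] /andP[_ cq].
apply/and4P; split=> //.
- by rewrite 2!cons_uniq inE negb_or zw zq wq uq.
- by rewrite /= e_sym wz e_sym qw.
- by rewrite /= xw (connect_trans xw (connect1 wz)).
Qed.

Lemma spine_long_side s1 q s2 :
  uniq (s1 ++ q :: s2) -> sorted e (s1 ++ q :: s2) -> (1 < size s1)%N ->
  exists2 a, a \in s1 & e q a /\ ~ pendant q a.
Proof.
case/lastP: s1 => [//|s1 a]; case/lastP: s1 => [//|s c] + + _.
rewrite !cat_rcons cat_uniq sorted_cat_cons /= !inE !negb_or.
move=> /and3P[_ _ /andP[/and3P[_ cq _] _]] /andP[_ /and3P[ca aq _]].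
exists a; first by rewrite mem_rcons mem_head.
by split; [rewrite e_sym | move=> /(_ c ca) /eqP; rewrite (negbTE cq)].
Qed.

Lemma spine_short_end x s1 q s2 w z :
  spine x (s1 ++ q :: s2) -> w \notin s1 ++ q :: s2 -> z != q ->
  e q w -> e w z -> ~~ e q z -> (size s1 <= 1)%N || (size s2 <= 1)%N.
Proof.
move=> sp wp zq qw wz qz.
have [//|s1_long] := leqP (size s1) 1; have [//|s2_long] := leqP (size s2) 1.
have /and4P[_ up ssp _] := sp; have /and4P[_ up' ssp' _] := spine_rev sp.
rewrite rev_cat rev_cons cat_rcons in up' ssp'.
have [a as1 [qa npa]] := spine_long_side up ssp s1_long.
have [b bs2 [qb npb]] : exists2 b, b \in rev s2 & e q b /\ ~ pendant q b.
  by apply: spine_long_side up' ssp' _; rewrite size_rev.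
rewrite mem_rev in bs2.
have ab : a != b.
  move: up; rewrite cat_uniq => /and3P[_ /hasPn s1s2 _].
  have qs2b : b \in q :: s2 by rewrite inE bs2 orbT.
  by apply: contraNneq (s1s2 b qs2b) => <-.
have [wa wb] : w != a /\ w != b.
  by split; apply: contraNneq wp => ->; rewrite mem_cat ?as1 // inE bs2 !orbT.
by exfalso; case: (neighbours_pendant ab wa wb zq qa qb qw wz qz).
Qed.

Lemma spine_grow x p y : spine x p -> connect e x y -> ~~ dominated p y ->
  exists p', spine x p' /\ (size p < size p')%N.
Proof.
move=> sp xy ndy; have [q [w [z [[qp wp zp qw wz] [qz xw]]]]] := spine_escape sp xy ndy.
have zq : z != q by apply: contraNneq zp => ->.
have zw : z != w by apply: contraNneq qz => ->.
have grow (s1 s2 : seq T) : spine x (s1 ++ q :: s2) -> (size s1 <= 1)%N ->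
    w \notin s1 ++ q :: s2 -> z \notin s1 ++ q :: s2 ->
    exists p', spine x p' /\ (size (s1 ++ q :: s2) < size p')%N.
  move=> sp' s1_short wp' zp'; exists [:: z, w, q & s2].
  by split; [exact: spine_extend sp' wp' zp' zw qw wz xw | rewrite size_cat /=; lia].
case/splitPr: qp sp wp zp => s1 s2 sp wp zp.
case/orP: (spine_short_end sp wp zq qw wz qz) => [s1_short|s2_short].
  exact: grow.
have revE : rev (s1 ++ q :: s2) = rev s2 ++ q :: rev s1.
  by rewrite rev_cat rev_cons cat_rcons.
have := grow (rev s2) (rev s1); rewrite -revE !size_rev !mem_rev.
by move/(_ (spine_rev sp) s2_short wp zp).
Qed.

Lemma dominating_spine x :
  exists2 p, spine x p & forall y, connect e x y -> dominated p y.
Proof.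
suff grow m p : (#|T| - size p < m)%N -> spine x p ->
    exists2 p', spine x p' & forall y, connect e x y -> dominated p' y.
  by apply: (grow #|T|.+1 [:: x]); rewrite ?ltnS ?leq_subr // /spine /= connect0.
elim: m p => // m IH p lt_m sp.
have [dom|/forallPn[y]] := boolP [forall y, connect e x y ==> dominated p y].
  by exists p => // y xy; move/forallP/(_ y): dom; rewrite xy.
rewrite negb_imply => /andP[xy ndy].
have [p' [sp' lt_p']] := spine_grow sp xy ndy.
by apply: (IH p' _ sp'); have := spine_size sp'; lia.
Qed.

Lemma caterpillar_forest_of_acyclic : acyclic e -> caterpillar_forest e.
Proof.
move=> acyc; split=> // x; have [p /and4P[p0 up sp cp] dom] := dominating_spine x.
by exists p; split=> // y /dom /orP[yp|/hasP[z zp zy]]; [left | right; exists z].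
Qed.

End Spines.

Section IntervalGraphs.
Local Open Scope ring_scope.
Variables (R : realDomainType) (T : finType) (l r : T -> R).

Definition covers (i : T) (t : R) := l i <= t <= r i.

Definition nested (i j : T) := (l j <= l i) && (r i <= r j).

Definition overlap : rel T := fun i j => [&& i != j, l i <= r j & l j <= r i].

Hypothesis le_lr : forall i, l i <= r i.
Hypothesis ply2 : forall i j m t, i != j -> j != m -> i != m ->
  covers i t -> covers j t -> covers m t -> False.

Lemma overlap_sym : symmetric overlap.
Proof. by move=> i j; rewrite /overlap eq_sym [(l i <= r j) && _]andbC. Qed.

Lemma overlapP i j :
  reflect (i != j /\ exists t, covers i t && covers j t) (overlap i j).
Proof.
apply: (iffP and3P) => [[ij lirj ljri]|[ij [t /andP[/andP[lit tri] /andP[ljt trj]]]]].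
  split=> //; exists (Order.max (l i) (l j)).
  by rewrite /covers le_max ge_max le_max ge_max !lexx !le_lr lirj ljri !orbT.
by split=> //; [exact: le_trans lit trj | exact: le_trans ljt tri].
Qed.

Lemma nested_pendant q a : a != q -> nested a q -> pendant overlap q a.
Proof.
move=> aq /andP[lqa raq] c /overlapP[ca [t /andP[ct at_]]].
case: (eqVneq c q) => // cq; exfalso; apply: (ply2 ca aq cq ct at_).
by case/andP: at_ => lat tra; rewrite /covers (le_trans lqa lat) (le_trans tra raq).
Qed.

Lemma overlap_escape q c : overlap q c -> ~~ nested c q ->
  covers c (l q) || covers c (r q).
Proof.
case/and3P=> _ lqrc lcrq; rewrite /nested negb_and -!ltNge.
by case/orP=> h; rewrite /covers (ltW h) ?lqrc ?lcrq ?orbT.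
Qed.

Lemma overlap_neighbours_pendant q a b w z :
  a != b -> w != a -> w != b -> z != q ->
  overlap q a -> overlap q b -> overlap q w -> overlap w z -> ~~ overlap q z ->
  pendant overlap q a \/ pendant overlap q b.
Proof.
move=> ab wa wb zq qa qb qw wz qz.
have [qa' qb' qw'] : [/\ a != q, b != q & w != q].
  by split; [case/and3P: qa | case/and3P: qb | case/and3P: qw]; rewrite eq_sym.
have [aq|/(overlap_escape qa) a_end] := boolP (nested a q).
  by left; exact: nested_pendant.
have [bq|/(overlap_escape qb) b_end] := boolP (nested b q).
  by right; exact: nested_pendant.
have w_end : covers w (l q) || covers w (r q).
  apply: overlap_escape qw _; apply: contra qz => /andP[lqw rwq].
  case/and3P: wz => _ lwrz lzrw.
  by rewrite /overlap eq_sym zq (le_trans lqw lwrz) (le_trans lzrw rwq).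
have [ql qr] : covers q (l q) /\ covers q (r q) by rewrite /covers !lexx le_lr.
have aw : a != w by rewrite eq_sym.
exfalso; case/orP: a_end => ha; case/orP: b_end => hb; case/orP: w_end => hw;
  first [ exact: ply2 ab qb' qa' ha hb _ | exact: ply2 aw qw' qa' ha hw _
        | exact: ply2 wb qb' qw' hw hb _ ].
Qed.

Lemma overlap_acyclic : acyclic overlap.
Proof.
move=> p up p3; apply/negP => cp.
have [v0 v0p] : exists v0, v0 \in p.
  by case: p p3 {up cp} => // v0 p; exists v0; rewrite mem_head.
case: (arg_minP r v0p) => v vp vmin.
have [a [c [ap cp' ac /and3P[va _ lav] /and3P[cv lcv _]]]] := cycle_neighbours up p3 cp vp.
have cov u : u \in p -> l u <= r v -> covers u (r v).
  by move=> pu lu; rewrite /covers lu vmin.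
have av : a != v by rewrite eq_sym.
have vv : covers v (r v) by rewrite /covers le_lr lexx.
exact: ply2 ac cv av (cov a ap lav) (cov c cp' lcv) vv.
Qed.

Lemma interval_caterpillar_forest : caterpillar_forest overlap.
Proof.
exact: caterpillar_forest_of_acyclic overlap_sym overlap_neighbours_pendant
  overlap_acyclic.
Qed.

End IntervalGraphs.

Section BarVisibility.
Local Open Scope ring_scope.
Variables (R : realType) (k n : nat) (bl br by_ : 'I_n -> R).
Hypothesis k_gt0 : (0 < k)%N.
Hypothesis bars : bars_ok bl br by_.
Hypothesis tri_free : triangle_free (bar_kvis_rel k bl br by_).

Local Notation vis := (bar_kvis_rel k bl br by_).

Definition blockers (u w : 'I_n) (x : R) := [set b : 'I_n | (b != u) && (b != w) &&
  bar_meets_vseg bl br by_ x (by_ u) (by_ w) b].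

Definition between (x : R) (u w : 'I_n) :=
  [set b | covers bl br b x && (by_ u < by_ b < by_ w)].

Lemma covers_same_height i j x :
  by_ i = by_ j -> covers bl br i x -> covers bl br j x -> i = j.
Proof.
move=> hij /andP[lix xri] /andP[ljx xrj]; case: (eqVneq i j) => // ij.
by case: (bars.2 i j ij hij) => /lt_geF;
  [rewrite (le_trans ljx xri) | rewrite (le_trans lix xrj)].
Qed.

Lemma covers_height_neq i j x :
  i != j -> covers bl br i x -> covers bl br j x -> by_ i != by_ j.
Proof. by move=> ij ci cj; apply: contra_neq ij => /covers_same_height/(_ ci cj). Qed.

Lemma blockersC u w x : blockers u w x = blockers w u x.
Proof.
by apply/setP => b; rewrite !inE /bar_meets_vseg minC maxC [(b != u) && _]andbC.
Qed.

Lemma blockers_between u w x : by_ u < by_ w ->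
  covers bl br u x -> covers bl br w x -> blockers u w x = between x u w.
Proof.
move=> uw cu cw; apply/setP => b; rewrite !inE /bar_meets_vseg /covers.
rewrite (min_idPl (ltW uw)) (max_idPr (ltW uw)).
apply/idP/idP => [/andP[/andP[bu bw] /andP[cb /andP[ub bw']]]|/andP[cb /andP[ub bw']]].
  rewrite cb !lt_neqAle ub bw' !andbT (covers_height_neq bw cb cw).
  by rewrite eq_sym (covers_height_neq bu cb cu).
have bu : b != u by apply: contraTneq ub => ->; rewrite ltxx.
have bw : b != w by apply: contraTneq bw' => ->; rewrite ltxx.
by rewrite bu bw cb (ltW ub) (ltW bw').
Qed.

Lemma vis_of_blockers u w x : by_ u != by_ w ->
  covers bl br u x -> covers bl br w x -> (#|blockers u w x| <= k)%N -> vis u w.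
Proof.
move=> uw cu cw few; apply/asboolP; split; first by apply: contra_neq uw => ->.
by split=> //; exists x.
Qed.

Lemma no_three_stacked u v w x :
  covers bl br u x -> covers bl br v x -> covers bl br w x ->
  by_ u < by_ v -> by_ v < by_ w -> False.
Proof.
have [m] := ubnP #|between x u w|; elim: m => // m IH in u v w *.
rewrite ltnS => size_m cu cv cw uv vw; have uw := lt_trans uv vw.
have shrink u' w' c : by_ u <= by_ u' -> by_ w' <= by_ w ->
    c \in between x u w -> c \notin between x u' w' -> (#|between x u' w'| < m)%N.
  move=> uu' ww' cuw cn; apply: leq_trans size_m; apply/proper_card/properP.
  split; last by exists c.
  apply/subsetP => b; rewrite !inE => /andP[cb /andP[u'b bw']].
  by rewrite cb (le_lt_trans uu' u'b) (lt_le_trans bw' ww').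
have [/exists_inP[c cuw cv']|nc] := boolP [exists c in between x u w, c != v].
  have := cuw; rewrite inE => /andP[cc /andP[uc cw']].
  have := covers_height_neq cv' cc cv; rewrite neq_lt => /orP[cvh|vch].
    apply: (IH c v w) => //; apply: shrink cuw _; rewrite ?lexx ?(ltW uc) //.
    by rewrite inE ltxx andbF.
  apply: (IH u v c) => //; apply: shrink cuw _; rewrite ?lexx ?(ltW cw') //.
  by rewrite inE ltxx !andbF.
have only_v b : b \in between x u w -> b = v.
  by move=> buw; apply/eqP; apply: contraNT nc => bv; apply/exists_inP; exists b.
have empty u' w' : by_ u <= by_ u' -> by_ w' <= by_ w ->
    v \notin between x u' w' -> between x u' w' = set0.
  move=> uu' ww' vn; apply/setP => b; rewrite in_set0; apply: contraNF vn => bin.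
  rewrite -(only_v b) //; move: bin; rewrite !inE => /andP[cb /andP[u'b bw']].
  by rewrite cb (le_lt_trans uu' u'b) (lt_le_trans bw' ww').
have vis_uv : vis u v.
  apply: (vis_of_blockers (negbT (lt_eqF uv)) cu cv).
  by rewrite blockers_between // empty ?cards0 ?lexx ?(ltW vw) // inE ltxx !andbF.
have vis_vw : vis v w.
  apply: (vis_of_blockers (negbT (lt_eqF vw)) cv cw).
  by rewrite blockers_between // empty ?cards0 ?lexx ?(ltW uv) // inE ltxx !andbF.
have vis_wu : vis w u.
  apply: (vis_of_blockers (negbT (gt_eqF uw)) cw cu).
  rewrite blockersC blockers_between // (leq_trans _ k_gt0) //.
  by rewrite -(cards1 v) subset_leq_card //; apply/subsetP => b /only_v ->; rewrite inE.
exact: tri_free (conj vis_uv (conj vis_vw vis_wu)).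
Qed.

Lemma bar_ply2 i j m x : i != j -> j != m -> i != m ->
  covers bl br i x -> covers bl br j x -> covers bl br m x -> False.
Proof.
move=> ij jm im ci cj cm.
move: (covers_height_neq ij ci cj) (covers_height_neq jm cj cm).
move: (covers_height_neq im ci cm); rewrite !neq_lt => /orP[]h3 /orP[]h1 /orP[]h2;
  first [ exact: no_three_stacked ci cj cm h1 h2 | exact: no_three_stacked ci cm cj h3 h2
        | exact: no_three_stacked cm ci cj h3 h1 | exact: no_three_stacked cj ci cm h1 h3
        | exact: no_three_stacked cj cm ci h2 h3 | exact: no_three_stacked cm cj ci h2 h1 ].
Qed.

Lemma bar_le i : bl i <= br i.
Proof. exact: ltW (bars.1 i). Qed.

Lemma bar_kvis_relE : vis =2 overlap bl br.
Proof.
move=> i j; apply/asboolP/(overlapP bar_le)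
    => [[ij [_ [x [ci [cj _]]]]]|[ij [x /andP[ci cj]]]].
  by split=> //; exists x; apply/andP.
apply/asboolP; apply: (vis_of_blockers (covers_height_neq ij ci cj) ci cj).
rewrite (_ : blockers i j x = set0) ?cards0 //; apply/setP => b; rewrite !inE.
by apply/negP => /andP[/andP[bi bj] /andP[cb _]]; exact: bar_ply2 bi ij bj cb ci cj.
Qed.

End BarVisibility.

Theorem mainTheorem12 (R : realType) (k n : nat) (bl br by_ : 'I_n -> R) :
  (1 <= k)%N ->
  bars_ok bl br by_ ->
  triangle_free (bar_kvis_rel k bl br by_) ->
  caterpillar_forest (bar_kvis_rel k bl br by_).
Proof.
move=> k_gt0 bars tri_free.
have -> : bar_kvis_rel k bl br by_ = overlap bl br.
  by apply/funext => i; apply/funext => j; exact: bar_kvis_relE.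
exact: interval_caterpillar_forest (bar_le bars) (bar_ply2 k_gt0 bars tri_free).
Qed.
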